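(* Let $n\ge1$ and $T\in M_n(\mathcal L_K)$, regarded as an operator on $\mathbb C^n\otimes\ell_2(F_\infty)$. Put $$a(T)=\sup\{\|Tq\|_2: q\in\mathbb C^n\otimes\mathcal L^2_\alpha,\ \|q\|_2\le1\},\qquad b(T)=\sup\{\|T^*(b\otimes\delta_{1})\|_2: b\in\mathbb C^n,\ \|b\|_2\le1\},$$ where $\mathcal L^2_\alpha=\mathrm{span}\{\delta_x:x\in F_\alpha\}$ and $\delta_1$ is the basis vector of the identity element. Then $$\max\{a(T),b(T)\}\le\|T\|\le a(T)+b(T).$$
   Context: Let $F_\infty$ be the free group with free generators split into two infinite families $\alpha_1,\alpha_2,\dots$ and $e_1,e_2,\dots$; $F_\alpha$ is the subgroup generated by the $\alpha_i$, and $K=\bigcup_{j\ge1}e_jF_\alpha$. $\ell_2(F_\infty)$ has orthonormal basis $\{\delta_x\}$, $\lambda(x)\delta_y=\delta_{xy}$, and $\mathcal L_K=\mathrm{span}\{\lambda(x):x\in K\}$ (finite linear combinations). $M_n(\mathcal L_K)=M_n\otimes\mathcal L_K$ acts on $\mathbb C^n\otimes\ell_2(F_\infty)$ and $\|T\|$ is its operator norm. *)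

From HB Require Import structures.
From mathcomp Require Import all_boot all_order all_algebra.
From mathcomp Require Import complex.
From mathcomp Require Import boolp classical_sets reals.

Set Implicit Arguments.
Unset Strict Implicit.
Unset Printing Implicit Defensive.

Import Order.TTheory GRing.Theory Num.Theory.
Local Open Scope ring_scope.

(* The free group F_oo on generators alpha_1, alpha_2, ... (encoded   *)
(* as [inl i] for alpha_(i+1)) and e_1, e_2, ... (encoded as [inr j]  *)
(* for e_(j+1)).  A letter is a generator together with a flag telling *)
(* whether it is the inverse of that generator.  Elements of the free  *)
(* group are reduced words.                                            *)

Definition Letter := ((nat + nat) * bool)%type.

Definition flip (a : Letter) : Letter := (a.1, ~~ a.2).

Definition reduced (w : seq Letter) : bool :=
  sorted (fun a b => b != flip a) w.

Definition cons_red (a : Letter) (w : seq Letter) : seq Letter :=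
  if w is b :: w' then (if b == flip a then w' else a :: w) else [:: a].

Definition red (w : seq Letter) : seq Letter := foldr cons_red [::] w.

Lemma cons_red_reduced a w : reduced w -> reduced (cons_red a w).
Proof.
case: w => [|b w] //= Hw.
case: ifP => Hb; first by case: w Hw {Hb} => //= c w /andP [].
by rewrite /reduced /= Hw Hb.
Qed.

Lemma red_reduced w : reduced (red w).
Proof. by elim: w => [|a w IH] //=; apply: cons_red_reduced. Qed.

Definition FG := {w : seq Letter | reduced w}.

Definition oneFG : FG := exist _ [::] isT.
Definition mulFG (x y : FG) : FG :=
  exist _ (red (sval x ++ sval y)) (red_reduced _).
(* the inverse word is already reduced; [red] is applied only to carry
   the reducedness proof *)
Definition invFG (x : FG) : FG :=
  exist _ (red (rev (map flip (sval x)))) (red_reduced _).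

Definition gen_alpha (i : nat) : FG := exist _ [:: (inl i, false)] isT.
Definition gen_e (j : nat) : FG := exist _ [:: (inr j, false)] isT.

(* F_alpha: the subgroup generated by the alpha_i, i.e. reduced words
   all of whose letters are alpha-letters *)
Definition inFalpha (x : FG) : bool := all (fun a : Letter => if a.1 is inl _ then true else false) (sval x).

Definition inK (x : FG) : Prop :=
  exists (j : nat) (w : FG), inFalpha w /\ x = mulFG (gen_e j) w.

(* An element of L_K = span{lambda(x) : x in K} is given as a finite   *)
(* formal linear combination  sum_k c_k lambda(x_k)  (a list of pairs  *)
(* (c_k, x_k)) with all x_k in K.                                      *)
(* Vectors of C^n (x) l_2(F_oo) are functions 'I_n -> FG -> C; we only *)
(* use finitely supported ones (a dense subspace).                     *)

Section Ops.
Variable R : realType.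
Local Notation C := (R[i]).

Definition lincomb := seq (C * FG).

Definition in_LK (a : lincomb) : Prop := forall p, p \in a -> inK p.2.

(* (lambda(x) f)(y) = f(x^{-1} y), so lambda(x) delta_z = delta_(x z) *)
Definition lam_act (a : lincomb) (f : FG -> C) : FG -> C :=
  fun y => \sum_(p <- a) p.1 * f (mulFG (invFG p.2) y).

Definition mx_act n (T : 'M[lincomb]_n) (q : 'I_n -> FG -> C) : 'I_n -> FG -> C :=
  fun i y => \sum_(j < n) lam_act (T i j) (q j) y.

(* adjoint: (T^* )_(ij) = (T_(ji))^*,  (c lambda(x))^* = conj(c) lambda(x^{-1}) *)
Definition mx_adj n (T : 'M[lincomb]_n) : 'M[lincomb]_n :=
  \matrix_(i, j) map (fun p : C * FG => (conjc p.1, invFG p.2)) (T j i).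

Definition supported n (q : 'I_n -> FG -> C) (s : seq FG) : Prop :=
  forall i y, y \notin s -> q i y = 0.

Definition l2norm n (q : 'I_n -> FG -> C) (s : seq FG) : R :=
  Num.sqrt (\sum_(i < n) \sum_(y <- undup s) ComplexField.Normc.normc (q i y) ^+ 2).

(* operator norm, computed on the dense subspace of finitely supported
   vectors *)
Definition opnorm n (T : 'M[lincomb]_n) : R :=
  sup [set r | exists (q : 'I_n -> FG -> C) (s s' : seq FG),
    [/\ supported q s, supported (mx_act T q) s', l2norm q s <= 1
      & r = l2norm (mx_act T q) s']].

Definition aT n (T : 'M[lincomb]_n) : R :=
  sup [set r | exists (q : 'I_n -> FG -> C) (s s' : seq FG),
    [/\ all inFalpha s, supported q s, supported (mx_act T q) s',
        l2norm q s <= 1 & r = l2norm (mx_act T q) s']].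

Definition vec_delta1 n (b : 'I_n -> C) : 'I_n -> FG -> C :=
  fun i y => if y == oneFG then b i else 0.

Definition bT n (T : 'M[lincomb]_n) : R :=
  sup [set r | exists (b : 'I_n -> C) (s' : seq FG),
    [/\ Num.sqrt (\sum_(i < n) ComplexField.Normc.normc (b i) ^+ 2) <= 1,
        supported (mx_act (mx_adj T) (vec_delta1 b)) s'
      & r = l2norm (mx_act (mx_adj T) (vec_delta1 b)) s']].

End Ops.

(* The lower bounds are immediate: a(T) is a supremum over a subset of the
   vectors defining ||T||, and eta = T^*(b (x) delta_1) satisfies
   ||eta||^2 = <b (x) delta_1, T eta> <= ||b|| ||T|| ||eta||.
   For the upper bound write x in K as e_j w with w in F_alpha.  Then x^-1 g
   either cancels the first letter of g (exactly when g starts with e_j) or is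
   the reduced concatenation of x^-1 and g, and T q splits accordingly.  In the
   cancelling part write g = h t, with h the first letter of g followed by the
   longest alpha-word after it: q is only seen through the slices
   v |-> q (v t), v in F_alpha, on which T acts as on C^n (x) L^2_alpha, so this
   part has norm at most a(T) ||q||.  In the concatenating part the value at g
   is (T r_g)(., 1) for the shifted vector r_g y = q (y g), hence by duality at
   most b(T) ||r_g||; since such a concatenation y g determines y and g, the
   sum over g of ||r_g||^2 is at most ||q||^2. *)

From mathcomp Require Import all_boot all_order all_algebra.
From mathcomp Require Import complex.
From mathcomp Require Import boolp classical_sets reals.
From mathcomp Require Import ring.

Set Implicit Arguments.
Unset Strict Implicit.
Unset Printing Implicit Defensive.

Import Order.TTheory GRing.Theory Num.Theory.

(** * Reduced words and the free group *)

Lemma flipK : involutive flip.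
Proof. by case=> a b; rewrite /flip /= negbK. Qed.

Lemma reduced_cons a w :
  reduced (a :: w) = (if w is b :: _ then b != flip a else true) && reduced w.
Proof. by case: w. Qed.

Lemma reduced_catP u v : reduced (u ++ v) =
  [&& reduced u, reduced v &
     if u is x :: u' then (if v is y :: _ then y != flip (last x u') else true) else true].
Proof.
case: u => [|x u] /=; first by rewrite andbT.
rewrite /reduced /= cat_path; case: v => [|y v] /=; first by rewrite !andbT.
by case: (path _ x u); case: (path _ y v); case: (y != _).
Qed.

Lemma reduced_catl u v : reduced (u ++ v) -> reduced u.
Proof. by rewrite reduced_catP => /and3P []. Qed.

Lemma reduced_catr u v : reduced (u ++ v) -> reduced v.
Proof. by rewrite reduced_catP => /and3P []. Qed.

Lemma reduced_rcons_cat u b v : reduced (rcons u b) -> reduced v ->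
  ohead v != Some (flip b) -> reduced (rcons u b ++ v).
Proof.
move=> Rub Rv vb; rewrite reduced_catP Rub Rv /=.
case: u {Rub} => [|x u] /=; case: v {Rv} vb => [|c v] //= vb; rewrite ?last_rcons;
  by apply: contra vb => /eqP ->.
Qed.

Definition revflip (u : seq Letter) : seq Letter := rev (map flip u).

Lemma revflipK : involutive revflip.
Proof. by move=> u; rewrite /revflip map_rev revK -map_comp (eq_map flipK) map_id. Qed.

Lemma revflip_cons a u : revflip (a :: u) = rcons (revflip u) (flip a).
Proof. by rewrite /revflip /= rev_cons. Qed.

Lemma reduced_revflip w : reduced w -> reduced (revflip w).
Proof.
elim: w => [|a w IH] //; rewrite reduced_cons => /andP [aw Rw].
rewrite revflip_cons -cats1 reduced_catP IH //=.
case: w aw {IH Rw} => [|b w] //= ba; rewrite revflip_cons.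
by case: (revflip w) => [|x r] /=; rewrite ?last_rcons flipK eq_sym.
Qed.

Lemma red_id w : reduced w -> red w = w.
Proof.
elim: w => [|a w IH] //; rewrite reduced_cons => /andP [ab Rw] /=.
rewrite IH //; case: w ab {IH Rw} => [|b w] //= /negbTE -> //.
Qed.

Lemma cons_redK a z : reduced z -> cons_red a (cons_red (flip a) z) = z.
Proof.
case: z => [|b z]; rewrite ?reduced_cons /= ?eqxx // => /andP [bz _].
case: ifP => [/eqP|_]; last by rewrite /= eqxx.
rewrite flipK => <-; case: z bz => [|c z] //= /negbTE -> //.
Qed.

Lemma reduced_foldr_red z u : reduced z -> reduced (foldr cons_red z u).
Proof. by move=> Rz; elim: u => [|a u IH] //=; apply: cons_red_reduced. Qed.

Lemma foldr_red z u : reduced z -> foldr cons_red z (red u) = foldr cons_red z u.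
Proof.
move=> Rz; elim: u => [|a u IH] //=; rewrite -IH; case: (red u) => [|b x] //=.
by case: ifP => [/eqP ->|_] //=; rewrite cons_redK // reduced_foldr_red.
Qed.

Lemma red_catl u v : red (red u ++ v) = red (u ++ v).
Proof. by rewrite /red !foldr_cat foldr_red // red_reduced. Qed.

Lemma red_catr u v : red (u ++ red v) = red (u ++ v).
Proof. by rewrite /red !foldr_cat -!/(red _) (red_id (red_reduced v)). Qed.

Lemma red_cat_flip u a v : red (u ++ flip a :: a :: v) = red (u ++ v).
Proof.
have := cons_redK (flip a) (red_reduced v); rewrite flipK => aaK.
by rewrite /red !foldr_cat /= -/(red v) aaK.
Qed.

Lemma red_revflipl u : red (revflip u ++ u) = [::].
Proof.
elim: u => [|a u IH] //.
by rewrite revflip_cons -cats1 -catA /= red_cat_flip.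
Qed.

Lemma mem_red w : {subset red w <= w}.
Proof.
elim: w => [|a w IH] //= x; case: (red w) IH => [|b r] IH /=.
  by rewrite mem_seq1 inE => ->.
case: ifP => _ xr; rewrite inE; last case/predU1P: xr => [->|/IH ->]; rewrite ?eqxx ?orbT //.
by rewrite IH ?orbT // inE xr orbT.
Qed.

Lemma all_red (P : pred Letter) w : all P w -> all P (red w).
Proof. by move=> /allP Pw; apply/allP => x /mem_red /Pw. Qed.

Lemma invFGE x : sval (invFG x) = revflip (sval x).
Proof. by apply/red_id/reduced_revflip; case: x. Qed.

Lemma mulFGE x y : reduced (sval x ++ sval y) -> sval (mulFG x y) = sval x ++ sval y.
Proof. exact: red_id. Qed.

Lemma mulFGA x y z : mulFG (mulFG x y) z = mulFG x (mulFG y z).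
Proof. by apply: val_inj; rewrite /= red_catl red_catr catA. Qed.

Lemma mul1FG x : mulFG oneFG x = x.
Proof. by apply: val_inj; rewrite /= red_id //; case: x. Qed.

Lemma mulFG1 x : mulFG x oneFG = x.
Proof. by apply: val_inj; rewrite /= cats0 red_id //; case: x. Qed.

Lemma mulVFG x : mulFG (invFG x) x = oneFG.
Proof. by apply: val_inj; rewrite /= red_catl red_revflipl. Qed.

Lemma mulFGV x : mulFG x (invFG x) = oneFG.
Proof.
by apply: val_inj; rewrite /= red_catr -{1}(revflipK (sval x)) red_revflipl.
Qed.

Lemma mulKFG x y : mulFG (invFG x) (mulFG x y) = y.
Proof. by rewrite -mulFGA mulVFG mul1FG. Qed.

Lemma mulKVFG x y : mulFG x (mulFG (invFG x) y) = y.
Proof. by rewrite -mulFGA mulFGV mul1FG. Qed.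

Lemma mulFGI x : injective (mulFG x).
Proof. by move=> y z yz; rewrite -(mulKFG x y) yz mulKFG. Qed.

Lemma invFGK : involutive invFG.
Proof. by move=> x; apply: (@mulFGI (invFG x)); rewrite mulVFG mulFGV. Qed.

Lemma mulFG_eq1 x y : (mulFG x y == oneFG) = (y == invFG x).
Proof.
apply/eqP/eqP => [xy1|->]; last exact: mulFGV.
by rewrite -(mulKFG x y) xy1 mulFG1.
Qed.

(** * Alpha blocks and the set K *)

Definition is_alpha (a : Letter) : bool := if a.1 is inl _ then true else false.

Lemma inFalphaE x : inFalpha x = all is_alpha (sval x).
Proof. by []. Qed.

Lemma is_alpha_flip a : is_alpha (flip a) = is_alpha a.
Proof. by case: a. Qed.

Lemma all_alpha_revflip u : all is_alpha (revflip u) = all is_alpha u.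
Proof. by rewrite all_rev all_map; apply: eq_all => a; rewrite /= is_alpha_flip. Qed.

Fixpoint alpha_prefix (w : seq Letter) : seq Letter :=
  if w is a :: w' then (if is_alpha a then a :: alpha_prefix w' else [::]) else [::].

Fixpoint alpha_rest (w : seq Letter) : seq Letter :=
  if w is a :: w' then (if is_alpha a then alpha_rest w' else w) else [::].

Definition head_not_alpha (w : seq Letter) : bool :=
  if w is b :: _ then ~~ is_alpha b else true.

Lemma cat_alpha_prefix_rest w : alpha_prefix w ++ alpha_rest w = w.
Proof. by elim: w => [|a w IH] //=; case: ifP => //= _; rewrite IH. Qed.

Lemma all_alpha_prefix w : all is_alpha (alpha_prefix w).
Proof. by elim: w => [|a w IH] //=; case: ifP => //= ->. Qed.

Lemma head_not_alpha_rest w : head_not_alpha (alpha_rest w).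
Proof. by elim: w => [|a w IH] //=; case: ifP => //= ->. Qed.

Lemma alpha_prefix_cat u v :
  all is_alpha u -> head_not_alpha v -> alpha_prefix (u ++ v) = u.
Proof.
elim: u => [|a u IH] /=; first by case: v => [|b v] //= _ /negbTE ->.
by case/andP => -> Au Hv; rewrite IH.
Qed.

Lemma alpha_rest_cat u v :
  all is_alpha u -> head_not_alpha v -> alpha_rest (u ++ v) = v.
Proof.
elim: u => [|a u IH] /=; first by case: v => [|b v] //= _ /negbTE ->.
by case/andP => -> Au Hv; rewrite IH.
Qed.

Lemma reduced_cat_alpha u v : all is_alpha u -> reduced u -> reduced v ->
  head_not_alpha v -> reduced (u ++ v).
Proof.
move=> Au Ru Rv Hv; rewrite reduced_catP Ru Rv /=.
case: u Au {Ru} => [|x u] // Au; case: v Hv {Rv} => [|y v] //= Hy.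
apply: contra Hy => /eqP ->; rewrite is_alpha_flip.
by apply: (allP Au); apply: mem_last.
Qed.

Definition alpha_prefixFG (y : FG) : FG :=
  exist _ (alpha_prefix (sval y))
    (reduced_catl (etrans (congr1 reduced (cat_alpha_prefix_rest _)) (svalP y))).

Definition alpha_restFG (y : FG) : FG :=
  exist _ (alpha_rest (sval y))
    (reduced_catr (etrans (congr1 reduced (cat_alpha_prefix_rest _)) (svalP y))).

Lemma alpha_prefix_restFG v t : inFalpha v -> head_not_alpha (sval t) ->
  alpha_prefixFG (mulFG v t) = v /\ alpha_restFG (mulFG v t) = t.
Proof.
case: v t => [v Rv] [t Rt] /= Av Ht.
have vt : red (v ++ t) = v ++ t by apply/red_id/reduced_cat_alpha.
by split; apply: val_inj; rewrite /= vt ?alpha_prefix_cat ?alpha_rest_cat.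
Qed.

Definition head_block (g : seq Letter) : seq Letter :=
  if g is a :: r then a :: alpha_prefix r else [::].

Definition tail_block (g : seq Letter) : seq Letter :=
  if g is a :: r then alpha_rest r else [::].

Lemma cat_head_tail_block g : head_block g ++ tail_block g = g.
Proof. by case: g => [|a r] //=; rewrite cat_alpha_prefix_rest. Qed.

Definition head_blockFG (g : FG) : FG :=
  exist _ (head_block (sval g))
    (reduced_catl (etrans (congr1 reduced (cat_head_tail_block _)) (svalP g))).

Definition tail_blockFG (g : FG) : FG :=
  exist _ (tail_block (sval g))
    (reduced_catr (etrans (congr1 reduced (cat_head_tail_block _)) (svalP g))).

Lemma mul_head_tail_blockFG g : mulFG (head_blockFG g) (tail_blockFG g) = g.
Proof. by apply: val_inj; rewrite /= cat_head_tail_block red_id //; case: g. Qed.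

Lemma head_not_alpha_tail_block g : head_not_alpha (tail_block g).
Proof. by case: g => [|a r] //=; apply: head_not_alpha_rest. Qed.

Definition eL (j : nat) : Letter := (inr j, false).

Lemma inK_word x : inK x ->
  exists j u, [/\ all is_alpha u, reduced u & sval x = eL j :: u].
Proof.
case=> j [[u Ru] [Au ->]]; rewrite inFalphaE /= in Au.
exists j, u; split=> //; apply: mulFGE.
change (reduced (eL j :: u)); rewrite reduced_cons Ru andbT.
by case: u {Ru} Au => [|b u] //= /andP [Ab _]; apply: contraTneq Ab => ->.
Qed.

Lemma inK_head x : inK x -> exists j, ohead (sval x) = Some (eL j).
Proof. by case/inK_word => j [u [_ _ ->]]; exists j. Qed.

(* y is an alpha word followed by one more letter b, and g does not start
   with b^-1, so that y g is the reduced concatenation of y and g. *)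
Definition junction (y g : FG) : bool :=
  if alpha_rest (sval y) is [:: b] then ohead (sval g) != Some (flip b) else false.

Lemma junctionP y g : junction y g -> exists b,
  [/\ ~~ is_alpha b, ohead (sval g) != Some (flip b)
    & sval y = rcons (alpha_prefix (sval y)) b].
Proof.
rewrite /junction; have := cat_alpha_prefix_rest (sval y).
have := head_not_alpha_rest (sval y).
by case: (alpha_rest _) => [|b [|c r]] //= Hb Ey gb; exists b; rewrite -cats1 Ey.
Qed.

Lemma junction_mul y g : junction y g -> sval (mulFG y g) = sval y ++ sval g.
Proof.
case/junctionP => b [_ gb Ey]; apply: mulFGE; rewrite Ey.
by apply: reduced_rcons_cat => //; [rewrite -Ey; case: y {Ey} | case: g gb].
Qed.

Lemma junction_inj y g y' g' : junction y g -> junction y' g' ->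
  mulFG y g = mulFG y' g' -> y = y' /\ g = g'.
Proof.
move=> J J' /(congr1 sval); rewrite (junction_mul J) (junction_mul J').
case/junctionP: J => b [Hb _ Ey]; case/junctionP: J' => b' [Hb' _ Ey'].
rewrite Ey Ey' -!cats1 -!catA /= => E.
have Ep : alpha_prefix (sval y) = alpha_prefix (sval y').
  by have := congr1 alpha_prefix E; rewrite !alpha_prefix_cat ?all_alpha_prefix.
move: E; rewrite Ep => /(congr1 (drop (size (alpha_prefix (sval y'))))).
rewrite !drop_size_cat // => -[Eb Eg].
by split; apply: val_inj => //=; rewrite Ey Ey' Ep Eb.
Qed.

Lemma junction_invK x g : inK x ->
  junction (invFG x) g = (ohead (sval g) != ohead (sval x)).
Proof.
case/inK_word => j [u [Au _ Ex]].
by rewrite /junction invFGE Ex revflip_cons -cats1 alpha_rest_cat ?all_alpha_revflip.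
Qed.

Lemma inFalpha_invK_head_block x g k : inK x -> ohead (sval g) = Some (eL k) ->
  inFalpha (mulFG (invFG x) (head_blockFG g)) = (ohead (sval g) == ohead (sval x)).
Proof.
move=> Kx; have Rx' := svalP (invFG x); case/inK_word: Kx => j [u [Au _ Ex]].
rewrite invFGE Ex revflip_cons in Rx'.
case: g => [[|a r] Rg] // -[ak]; subst a; rewrite inFalphaE.
have -> : sval (mulFG (invFG x) (head_blockFG (exist _ (eL k :: r) Rg))) =
    red (rcons (revflip u) (flip (eL j)) ++ eL k :: alpha_prefix r).
  by rewrite -revflip_cons -Ex -invFGE.
rewrite Ex [_ == _]/=; have [<-|jk] := eqVneq j k.
  rewrite eqxx cat_rcons red_cat_flip; apply: all_red.
  by rewrite all_cat all_alpha_revflip Au all_alpha_prefix.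
have kj : (Some (eL k) == Some (eL j)) = false.
  by apply/eqP => -[/eqP]; rewrite eq_sym (negbTE jk).
have Rk : reduced (eL k :: alpha_prefix r).
  by apply: (@reduced_catl _ (alpha_rest r)); rewrite cat_cons cat_alpha_prefix_rest.
rewrite kj red_id; last by apply: reduced_rcons_cat => //=; rewrite flipK kj.
by apply/negP => /allP /(_ (flip (eL j))); rewrite mem_cat mem_rcons mem_head => /(_ isT).
Qed.

(** * Finite sums *)

Local Open Scope ring_scope.

Lemma eq_sum_nz_support (V : nmodType) (I : eqType) (s s' : seq I) (F : I -> V) :
  uniq s -> uniq s' -> (forall i, F i != 0 -> (i \in s) = (i \in s')) ->
  \sum_(i <- s) F i = \sum_(i <- s') F i.
Proof.
move=> Us Us' ss'.
have nz r : \sum_(i <- r) F i = \sum_(i <- [seq i <- r | F i != 0]) F i.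
  by rewrite big_filter [RHS]big_mkcond; apply: eq_bigr => i _; case: eqP.
rewrite nz [RHS]nz; apply/perm_big/uniq_perm; rewrite ?filter_uniq //.
by move=> i; rewrite !mem_filter; case: (F i =P 0) => //= /eqP /ss'.
Qed.

Lemma ler_sum_subset (R : numDomainType) (I : eqType) (s s' : seq I) (F : I -> R) :
  uniq s -> uniq s' -> {subset s <= s'} -> (forall i, 0 <= F i) ->
  \sum_(i <- s) F i <= \sum_(i <- s') F i.
Proof.
move=> Us Us' ss' F0.
rewrite [X in _ <= X](bigID (fun i => i \in s)) /= -[X in X <= _]addr0 lerD ?sumr_ge0 //.
have s's : perm_eq [seq i <- s' | i \in s] s.
  apply: uniq_perm; rewrite ?filter_uniq // => i; rewrite mem_filter.
  by apply/andP/idP => [[]|si] //; split=> //; apply: ss'.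
by rewrite -[X in _ <= X]big_filter (perm_big _ s's).
Qed.

Lemma ler_sum_inj (R : numDomainType) (I J : eqType) (s : seq I) (s' : seq J)
    (h : I -> J) (F : I -> R) (G : J -> R) :
  uniq s -> uniq s' -> (forall j, 0 <= G j) ->
  (forall i, i \in s -> F i != 0 -> h i \in s' /\ F i <= G (h i)) ->
  {in [pred i | (i \in s) && (F i != 0)] &, injective h} ->
  \sum_(i <- s) F i <= \sum_(j <- s') G j.
Proof.
move=> Us Us' G0 hF hI; set s0 := [seq i <- s | F i != 0].
have s0P i : i \in s0 -> (i \in s) && (F i != 0) by rewrite mem_filter andbC.
rewrite (@eq_sum_nz_support _ _ s s0) ?filter_uniq //; last first.
  by move=> i Fi; rewrite mem_filter Fi.
apply: (@le_trans _ _ (\sum_(i <- s0) G (h i))).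
  rewrite big_seq [X in _ <= X]big_seq; apply: ler_sum => i /s0P /andP [si Fi].
  by case: (hF i si Fi).
rewrite -(big_map h predT); apply: ler_sum_subset => //.
  by rewrite map_inj_in_uniq ?filter_uniq // => i i' /s0P Pi /s0P Pi'; apply: hI.
by move=> j /mapP [i /s0P /andP [si Fi] ->]; case: (hF i si Fi).
Qed.

Lemma sum_seq_pred1 (V : nmodType) (I : eqType) (s : seq I) (c : I) (F : I -> V) :
  uniq s -> c \in s -> \sum_(y <- s) (if y == c then F y else 0) = F c.
Proof. by move=> Us cs; rewrite (bigD1_seq c) //= eqxx big1 ?addr0 // => y /negbTE ->. Qed.

Lemma cauchy_schwarz_sqr (R : realDomainType) (I : Type) (s : seq I) (x y : I -> R) :
  (\sum_(i <- s) x i * y i) ^+ 2 <= (\sum_(i <- s) x i ^+ 2) * \sum_(i <- s) y i ^+ 2.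
Proof.
set A := \sum_(i <- s) x i ^+ 2; set B := \sum_(i <- s) y i ^+ 2.
set S := \sum_(i <- s) x i * y i.
have : \sum_(i <- s) \sum_(j <- s) (x i * y j - x j * y i) ^+ 2 = 2 * (A * B - S ^+ 2).
  transitivity (\sum_(i <- s) (x i ^+ 2 * B + A * y i ^+ 2 - 2 * (x i * y i * S))).
    apply: eq_bigr => i _; rewrite /A /B /S mulr_sumr mulr_suml mulr_sumr mulr_sumr.
    rewrite -big_split -sumrB /=; apply: eq_bigr => j _; ring.
  rewrite sumrB big_split /= -mulr_suml -mulr_sumr -mulr_sumr -mulr_suml -/A -/B -/S; ring.
move=> lagrange; rewrite -subr_ge0 -(pmulr_rge0 _ (ltr0Sn R 1)) -lagrange.
by apply: sumr_ge0 => i _; apply: sumr_ge0 => j _; apply: sqr_ge0.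
Qed.

Lemma cauchy_schwarz (R : rcfType) (I : Type) (s : seq I) (x y : I -> R) :
  \sum_(i <- s) x i * y i <=
  Num.sqrt (\sum_(i <- s) x i ^+ 2) * Num.sqrt (\sum_(i <- s) y i ^+ 2).
Proof.
have sqr_sum_ge0 (z : I -> R) : 0 <= \sum_(i <- s) z i ^+ 2.
  by apply: sumr_ge0 => i _; apply: sqr_ge0.
rewrite -sqrtrM //; apply: le_trans (ler_norm _) _.
by rewrite -sqrtr_sqr ler_sqrt ?cauchy_schwarz_sqr ?mulr_ge0.
Qed.

Lemma homogeneous_le (R : realFieldType) (X : Type) (scale : R -> X -> X)
    (N1 N2 : X -> R) (P : X -> Prop) (A : R) :
  (forall x, 0 <= N1 x) ->
  (forall k x, 0 < k -> N1 (scale k x) = k * N1 x) ->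
  (forall k x, 0 < k -> N2 (scale k x) = k * N2 x) ->
  (forall k x, 0 < k -> P x -> P (scale k x)) ->
  (forall x, P x -> N1 x <= 1 -> N2 x <= A) ->
  forall x, P x -> N2 x <= A * N1 x.
Proof.
move=> N1_ge0 N1Z N2Z PZ le_A x Px.
have [N1x0|N1x_neq0] := eqVneq (N1 x) 0.
  rewrite N1x0 mulr0 leNgt; apply/negP => N2x_gt0.
  pose k := (`|A| + 1) / N2 x.
  have k_gt0 : 0 < k by rewrite divr_gt0 // ltr_pwDr.
  have := le_A _ (PZ _ _ k_gt0 Px); rewrite N1Z // N1x0 mulr0 ler01 N2Z //.
  rewrite /k divfK ?gt_eqF // => /(_ isT); apply/negP; rewrite -ltNge.
  by apply: le_lt_trans (ler_norm A) _; rewrite ltrDl.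
have N1x_gt0 : 0 < N1 x by rewrite lt_def N1x_neq0 N1_ge0.
have iN1x_gt0 : 0 < (N1 x)^-1 by rewrite invr_gt0.
have := le_A _ (PZ _ _ iN1x_gt0 Px); rewrite N1Z // mulVf // lexx N2Z // => /(_ isT) le_A1.
by rewrite -[N2 x](mulVKf N1x_neq0) [N1 x * _]mulrC ler_pM2r.
Qed.

Lemma le_of_sqr_le_mul (R : numDomainType) (x c : R) :
  0 <= x -> 0 <= c -> x ^+ 2 <= c * x -> x <= c.
Proof.
move=> x_ge0 c_ge0 le_x2; have [->//|x_neq0] := eqVneq x 0.
have x_gt0 : 0 < x by rewrite lt_def x_neq0.
by rewrite -(ler_pM2r x_gt0) -expr2.
Qed.

Lemma sqrt_le_mul_sqrt (R : rcfType) (x y c : R) : 0 <= y -> 0 <= c ->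
  (Num.sqrt x <= c * Num.sqrt y) = (x <= c ^+ 2 * y).
Proof.
move=> y_ge0 c_ge0.
have -> : c * Num.sqrt y = Num.sqrt (c ^+ 2 * y).
  by rewrite sqrtrM ?sqr_ge0 // sqrtr_sqr ger0_norm.
by rewrite ler_sqrt ?mulr_ge0 ?sqr_ge0.
Qed.

Lemma allpairs_pair_uniq (A B : eqType) (s : seq A) (t : seq B) :
  uniq s -> uniq t -> uniq [seq (a, b) | a <- s, b <- t].
Proof. by move=> Us Ut; apply: allpairs_uniq => // -[a b] [a' b'] _ _ [-> ->]. Qed.

Lemma mem_allpairs_pair (A B : eqType) (s : seq A) (t : seq B) a b :
  ((a, b) \in [seq (x, y) | x <- s, y <- t]) = (a \in s) && (b \in t).
Proof.
apply/allpairsP/andP => [[[x y] [xs yt [-> ->]]] | [a_s b_t]] //.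
by exists (a, b).
Qed.

(** * Finitely supported vectors and operators *)

Section L2.
Variable R : realType.
Local Notation C := R[i].
Local Notation normc := (@ComplexField.Normc.normc R).

Lemma normc_ge0 (z : C) : 0 <= normc z.
Proof. by case: z => a b; apply: sqrtr_ge0. Qed.

Lemma normc_conjc (z : C) : normc z^*%C = normc z.
Proof. by case: z => a b /=; rewrite sqrrN. Qed.

Lemma normc_real (k : R) : normc k%:C%C = `|k|.
Proof. by rewrite /= expr0n /= addr0 sqrtr_sqr. Qed.

Lemma mulc_conjc (z : C) : z * z^*%C = (normc z ^+ 2)%:C%C.
Proof.
case: z => a b; rewrite /= sqr_sqrtr ?addr_ge0 ?sqr_ge0 //.
by simpc; apply/eqP; rewrite eq_complex /= [b * a]mulrC addNr -!expr2 !eqxx.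
Qed.

Lemma normc_sum (I : Type) (s : seq I) (F : I -> C) :
  normc (\sum_(i <- s) F i) <= \sum_(i <- s) normc (F i).
Proof.
elim: s => [|a s IH]; first by rewrite !big_nil ComplexField.Normc.normc0.
by rewrite !big_cons; apply: le_trans (le_normcD _ _) _; rewrite lerD2l.
Qed.

Lemma normc_eq0 (z : C) : (normc z == 0) = (z == 0).
Proof.
apply/eqP/eqP => [/ComplexField.Normc.eq0_normc //|->].
exact: ComplexField.Normc.normc0.
Qed.

Lemma sum_normc2_neq0 n (v : 'I_n -> C) :
  \sum_(i < n) normc (v i) ^+ 2 != 0 -> exists i, v i != 0.
Proof.
move=> nz; apply/existsP; apply: contraNT nz; rewrite negb_exists => /forallP v0.
rewrite big1 // => i _; move/negPn/eqP: (v0 i) => ->.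
by rewrite ComplexField.Normc.normc0 expr0n.
Qed.

Definition sqnorm n (q : 'I_n -> FG -> C) (L : seq FG) : R :=
  \sum_(i < n) \sum_(y <- L) normc (q i y) ^+ 2.

Lemma sqnorm_ge0 n (q : 'I_n -> FG -> C) L : 0 <= sqnorm q L.
Proof. by apply: sumr_ge0 => i _; apply: sumr_ge0 => y _; apply: sqr_ge0. Qed.

Lemma sqnormE n (q : 'I_n -> FG -> C) L :
  sqnorm q L = \sum_(y <- L) \sum_(i < n) normc (q i y) ^+ 2.
Proof. exact: exchange_big. Qed.

Lemma sqnorm_row_le n (q : 'I_n -> FG -> C) j L :
  \sum_(y <- L) normc (q j y) ^+ 2 <= sqnorm q L.
Proof.
rewrite /sqnorm (bigD1 j) //= lerDl.
by apply: sumr_ge0 => i _; apply: sumr_ge0 => y _; apply: sqr_ge0.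
Qed.

Lemma l2normE n (q : 'I_n -> FG -> C) s : l2norm q s = Num.sqrt (sqnorm q (undup s)).
Proof. by []. Qed.

Lemma l2norm_nil n (q : 'I_n -> FG -> C) : l2norm q [::] = 0.
Proof. by rewrite l2normE /sqnorm big1 ?sqrtr0 // => i _; rewrite big_nil. Qed.

Lemma l2norm_ge0 n (q : 'I_n -> FG -> C) s : 0 <= l2norm q s.
Proof. exact: sqrtr_ge0. Qed.

Lemma l2norm_point_le n (q : 'I_n -> FG -> C) s y : y \in s ->
  Num.sqrt (\sum_(i < n) normc (q i y) ^+ 2) <= l2norm q s.
Proof.
move=> ys; rewrite l2normE sqnormE ler_sqrt ?sumr_ge0 // => [|z _]; last first.
  by apply: sumr_ge0 => i _; apply: sqr_ge0.
rewrite (bigD1_seq y) ?mem_undup ?undup_uniq //= lerDl.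
by apply: sumr_ge0 => z _; apply: sumr_ge0 => i _; apply: sqr_ge0.
Qed.

Lemma eq_l2norm_supported n (q : 'I_n -> FG -> C) s s' :
  supported q s -> supported q s' -> l2norm q s = l2norm q s'.
Proof.
move=> qs qs'; rewrite !l2normE !sqnormE; congr Num.sqrt.
apply: eq_sum_nz_support; rewrite ?undup_uniq // => y /sum_normc2_neq0 [i qi].
rewrite !mem_undup; case: (boolP (y \in s)) => ys; case: (boolP (y \in s')) => ys' //.
  by rewrite qs' ?eqxx in qi.
by rewrite qs ?eqxx in qi.
Qed.

Lemma sum_normc_mul_le n (u v : 'I_n -> FG -> C) L :
  \sum_(i < n) \sum_(y <- L) normc (u i y) * normc (v i y) <=
  Num.sqrt (sqnorm u L) * Num.sqrt (sqnorm v L).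
Proof.
have := cauchy_schwarz [seq (i, y) | i <- index_enum 'I_n, y <- L]
  (fun p => normc (u p.1 p.2)) (fun p => normc (v p.1 p.2)).
by rewrite !big_allpairs.
Qed.

Lemma minkowski n (u v w : 'I_n -> FG -> C) L :
  (forall i y, w i y = u i y + v i y) ->
  Num.sqrt (sqnorm w L) <= Num.sqrt (sqnorm u L) + Num.sqrt (sqnorm v L).
Proof.
move=> wE; rewrite -(ger0_norm (addr_ge0 (sqrtr_ge0 _) (sqrtr_ge0 _))) -sqrtr_sqr.
rewrite ler_sqrt ?sqr_ge0 // sqrrD !sqr_sqrtr ?sqnorm_ge0 //.
apply: (@le_trans _ _ (\sum_(i < n) \sum_(y <- L) (normc (u i y) + normc (v i y)) ^+ 2)).
  apply: ler_sum => i _; apply: ler_sum => y _; rewrite wE.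
  by rewrite ler_sqr ?nnegrE ?addr_ge0 ?normc_ge0 ?le_normcD.
have -> : \sum_(i < n) \sum_(y <- L) (normc (u i y) + normc (v i y)) ^+ 2 =
    sqnorm u L + 2 * (\sum_(i < n) \sum_(y <- L) normc (u i y) * normc (v i y))
    + sqnorm v L.
  rewrite /sqnorm mulr_sumr -!big_split /=; apply: eq_bigr => i _.
  by rewrite mulr_sumr -!big_split /=; apply: eq_bigr => y _; ring.
by rewrite lerD2r lerD2l -[X in _ <= X]mulr_natl ler_pM2l ?ltr0Sn ?sum_normc_mul_le.
Qed.

Lemma cauchy_schwarzC (I : Type) (s : seq I) (u v : I -> C) :
  normc (\sum_(i <- s) u i * (v i)^*%C) <=
  Num.sqrt (\sum_(i <- s) normc (u i) ^+ 2) * Num.sqrt (\sum_(i <- s) normc (v i) ^+ 2).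
Proof.
apply: le_trans (normc_sum _ _) _; apply: le_trans (cauchy_schwarz _ _ _).
by apply: ler_sum => i _; rewrite ComplexField.Normc.normcM normc_conjc.
Qed.

Lemma sqnorm_pairing n (q : 'I_n -> FG -> C) L :
  (sqnorm q L)%:C%C = \sum_(y <- L) \sum_(i < n) q i y * (q i y)^*%C.
Proof.
rewrite sqnormE rmorph_sum; apply: eq_bigr => y _.
by rewrite rmorph_sum; apply: eq_bigr => i _; rewrite mulc_conjc.
Qed.

Lemma pairing_le n (u v : 'I_n -> FG -> C) L :
  normc (\sum_(y <- L) \sum_(i < n) u i y * (v i y)^*%C) <=
  Num.sqrt (sqnorm u L) * Num.sqrt (sqnorm v L).
Proof.
have := cauchy_schwarzC [seq (i, y) | i <- index_enum 'I_n, y <- L]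
  (fun p => u p.1 p.2) (fun p => v p.1 p.2).
by rewrite !big_allpairs exchange_big.
Qed.

End L2.

Section Operators.
Variable R : realType.
Local Notation C := R[i].
Local Notation normc := (@ComplexField.Normc.normc R).

Definition terms n (T : 'M[lincomb R]_n) : seq (C * FG) :=
  flatten [seq T i j | i <- index_enum 'I_n, j <- index_enum 'I_n].

Lemma mem_terms n (T : 'M[lincomb R]_n) i j p : p \in T i j -> p \in terms T.
Proof.
move=> pT; apply/flattenP; exists (T i j) => //.
exact: (allpairs_f (fun i j => T i j)) (mem_index_enum i) (mem_index_enum j).
Qed.

Lemma mx_actE n (T : 'M[lincomb R]_n) q i g :
  mx_act T q i g = \sum_(j < n) \sum_(p <- T i j) p.1 * q j (mulFG (invFG p.2) g).
Proof. by []. Qed.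

Lemma mx_act0 n (T : 'M[lincomb R]_n) (q : 'I_n -> FG -> C) i g :
  (forall j y, q j y = 0) -> mx_act T q i g = 0.
Proof.
by move=> q0; rewrite mx_actE big1 // => j _; rewrite big1 // => p _; rewrite q0 mulr0.
Qed.

Definition act_support n (T : 'M[lincomb R]_n) (L : seq FG) : seq FG :=
  [seq mulFG p.2 y | p <- terms T, y <- L].

Lemma supported_mx_act n (T : 'M[lincomb R]_n) q L :
  supported q L -> supported (mx_act T q) (act_support T L).
Proof.
move=> qL i g gn; rewrite mx_actE big1 // => j _; rewrite big1_seq // => p /andP [_ pT].
rewrite qL ?mulr0 //; apply: contra gn => gL.
by rewrite -(mulKVFG p.2 g); apply: allpairs_f gL; apply: mem_terms pT.
Qed.

Lemma supported_sub n (q : 'I_n -> FG -> C) s s' :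
  supported q s -> {subset s <= s'} -> supported q s'.
Proof. by move=> qs ss' i y ys'; apply: qs; apply: contra ys'; apply: ss'. Qed.

Definition scalev n (c : C) (q : 'I_n -> FG -> C) : 'I_n -> FG -> C :=
  fun i y => c * q i y.

Lemma mx_act_scalev n (T : 'M[lincomb R]_n) c q :
  mx_act T (scalev c q) = scalev c (mx_act T q).
Proof.
apply/funext => i; apply/funext => g; rewrite /scalev !mx_actE mulr_sumr.
by apply: eq_bigr => j _; rewrite mulr_sumr; apply: eq_bigr => p _; rewrite mulrCA.
Qed.

Lemma supported_scalev n c (q : 'I_n -> FG -> C) s :
  supported q s -> supported (scalev c q) s.
Proof. by move=> qs i y ys; rewrite /scalev qs ?mulr0. Qed.

Lemma l2norm_scalev n c (q : 'I_n -> FG -> C) s :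
  l2norm (scalev c q) s = normc c * l2norm q s.
Proof.
rewrite !l2normE -[normc c]ger0_norm ?normc_ge0 // -sqrtr_sqr -sqrtrM ?sqr_ge0 //.
congr Num.sqrt; rewrite /sqnorm mulr_sumr; apply: eq_bigr => i _.
rewrite mulr_sumr; apply: eq_bigr => y _.
by rewrite /scalev ComplexField.Normc.normcM exprMn.
Qed.

Lemma normc_mx_act_sqr_le n (T : 'M[lincomb R]_n) q i g :
  normc (mx_act T q i g) ^+ 2 <=
  (\sum_(j < n) \sum_(p <- T i j) normc p.1 ^+ 2) *
  \sum_(j < n) \sum_(p <- T i j) normc (q j (mulFG (invFG p.2) g)) ^+ 2.
Proof.
set D := \sum_(j < n) \sum_(p <- T i j) normc p.1 * normc (q j (mulFG (invFG p.2) g)).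
have le_D : normc (mx_act T q i g) <= D.
  rewrite mx_actE; apply: le_trans (normc_sum _ _) _; apply: ler_sum => j _.
  apply: le_trans (normc_sum _ _) _; apply: ler_sum => p _.
  by rewrite ComplexField.Normc.normcM.
apply: (@le_trans _ _ (D ^+ 2)).
  by rewrite ler_sqr ?nnegrE ?normc_ge0 // (le_trans _ le_D) ?normc_ge0.
have := cauchy_schwarz_sqr [seq (j, p) | j <- index_enum 'I_n, p <- T i j]
  (fun jp => normc jp.2.1) (fun jp => normc (q jp.1 (mulFG (invFG jp.2.2) g))).
by rewrite !big_allpairs_dep.
Qed.

Lemma sum_translate_le n (q : 'I_n -> FG -> C) s L j x :
  supported q s -> uniq L ->
  \sum_(g <- L) normc (q j (mulFG x g)) ^+ 2 <= \sum_(z <- undup s) normc (q j z) ^+ 2.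
Proof.
move=> qs UL; apply: (@ler_sum_inj _ _ _ _ _ (mulFG x)); rewrite ?undup_uniq //.
- by move=> z; apply: sqr_ge0.
- move=> g _; rewrite sqrf_eq0 normc_eq0 => qg; split=> //.
  by rewrite mem_undup; apply: contraR qg => /qs ->.
- by move=> g g' _ _ /mulFGI.
Qed.

(* A crude bound, only needed to know that the suprema are finite. *)
Lemma sqnorm_mx_act_bounded n (T : 'M[lincomb R]_n) : exists2 M, 0 <= M & forall q s L,
  supported q s -> uniq L -> sqnorm (mx_act T q) L <= M * sqnorm q (undup s).
Proof.
pose K i := \sum_(j < n) \sum_(p <- T i j) normc p.1 ^+ 2.
have K_ge0 i : 0 <= K i.
  by apply: sumr_ge0 => j _; apply: sumr_ge0 => p _; apply: sqr_ge0.
exists (\sum_(i < n) K i * (\sum_(j < n) size (T i j))%:R) => [|q s L qs UL].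
  by apply: sumr_ge0 => i _; apply: mulr_ge0.
rewrite /sqnorm mulr_suml; apply: ler_sum => i _.
apply: le_trans (ler_sum _ (fun g _ => normc_mx_act_sqr_le T q i g)) _.
rewrite -mulr_sumr -mulrA; apply: ler_wpM2l; first exact: K_ge0.
rewrite exchange_big /= natr_sum mulr_suml; apply: ler_sum => j _.
rewrite exchange_big /= -sum1_size natr_sum mulr_suml; apply: ler_sum => p _.
by rewrite mul1r; apply: le_trans (sum_translate_le _ _ qs UL) _; apply: sqnorm_row_le.
Qed.

End Operators.

(** * The norms a(T), b(T) and ||T|| *)

Local Open Scope classical_set_scope.

Section Norms.
Variable R : realType.
Local Notation C := R[i].
Local Notation normc := (@ComplexField.Normc.normc R).
Variables (n : nat) (T : 'M[lincomb R]_n).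

Definition opnorm_set := [set r | exists (q : 'I_n -> FG -> C) (s s' : seq FG),
  [/\ supported q s, supported (mx_act T q) s', l2norm q s <= 1
    & r = l2norm (mx_act T q) s']].

Definition aT_set := [set r | exists (q : 'I_n -> FG -> C) (s s' : seq FG),
  [/\ all inFalpha s, supported q s, supported (mx_act T q) s',
      l2norm q s <= 1 & r = l2norm (mx_act T q) s']].

Definition bnorm (b : 'I_n -> C) : R := Num.sqrt (\sum_(i < n) normc (b i) ^+ 2).

Definition adj_delta1 (b : 'I_n -> C) := mx_act (mx_adj T) (vec_delta1 b).

Definition bT_set := [set r | exists (b : 'I_n -> C) (s' : seq FG),
  [/\ bnorm b <= 1, supported (adj_delta1 b) s' & r = l2norm (adj_delta1 b) s']].

Lemma opnormE : opnorm T = sup opnorm_set. Proof. by []. Qed.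
Lemma aTE : aT T = sup aT_set. Proof. by []. Qed.
Lemma bTE : bT T = sup bT_set. Proof. by []. Qed.

Lemma sqr_bnorm (b : 'I_n -> C) : (bnorm b ^+ 2)%:C%C = \sum_(i < n) (b i)^*%C * b i.
Proof.
rewrite sqr_sqrtr ?sumr_ge0 // => [|i _]; last exact: sqr_ge0.
by rewrite rmorph_sum; apply: eq_bigr => i _; rewrite mulrC mulc_conjc.
Qed.

Lemma supported_vec_delta1 (b : 'I_n -> C) : supported (vec_delta1 b) [:: oneFG].
Proof. by move=> i y; rewrite mem_seq1 /vec_delta1 => /negbTE ->. Qed.

Lemma l2norm_vec_delta1 (b : 'I_n -> C) : l2norm (vec_delta1 b) [:: oneFG] = bnorm b.
Proof.
by rewrite l2normE /sqnorm /bnorm; congr Num.sqrt; apply: eq_bigr => i _;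
  rewrite /= big_seq1 /vec_delta1 eqxx.
Qed.

Lemma mx_act_bounded (U : 'M[lincomb R]_n) : exists B, forall q s s',
  supported q s -> l2norm q s <= 1 -> l2norm (mx_act U q) s' <= B.
Proof.
have [M M_ge0 M_bound] := sqnorm_mx_act_bounded U.
exists (Num.sqrt M) => q s s' qs; rewrite !l2normE ler_sqrt // => q_le1.
rewrite -sqrtr1 ler_sqrt // in q_le1.
apply: le_trans (M_bound _ _ _ qs (undup_uniq _)) _.
by rewrite ler_piMr.
Qed.

Lemma opnorm_set_ub : has_ubound opnorm_set.
Proof.
have [B leB] := mx_act_bounded T.
by exists B => _ [q [s [s' [qs _ q_le1 ->]]]]; apply: leB qs q_le1.
Qed.

Lemma aT_set_sub : aT_set `<=` opnorm_set.
Proof. by move=> _ [q [s [s' [_ qs Tqs' q_le1 ->]]]]; exists q, s, s'. Qed.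

Lemma bT_set_ub : has_ubound bT_set.
Proof.
have [B leB] := mx_act_bounded (mx_adj T).
exists B => _ [b [s' [b_le1 _ ->]]]; apply: leB (supported_vec_delta1 b) _.
by rewrite l2norm_vec_delta1.
Qed.

Lemma le_opnorm r : opnorm_set r -> r <= opnorm T.
Proof. by move=> Er; apply: ub_le_sup opnorm_set_ub _ Er. Qed.

Lemma le_aT r : aT_set r -> r <= aT T.
Proof.
move=> Er; apply: ub_le_sup _ _ Er; case: opnorm_set_ub => B B_ub.
by exists B => x /aT_set_sub /B_ub.
Qed.

Lemma le_bT r : bT_set r -> r <= bT T.
Proof. by move=> Er; apply: ub_le_sup bT_set_ub _ Er. Qed.

Lemma aT_set0 : aT_set 0.
Proof.
exists (fun _ _ => 0), [::], [::]; split; rewrite ?l2norm_nil //.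
by move=> i g _; apply: mx_act0.
Qed.

Lemma bT_set0 : bT_set 0.
Proof.
exists (fun _ => 0), [::]; rewrite l2norm_nil; split => //.
  by rewrite /bnorm big1 ?sqrtr0 ?ler01 // => i _; rewrite ComplexField.Normc.normc0 expr0n.
by move=> i g _; apply: mx_act0 => j y; rewrite /vec_delta1; case: ifP.
Qed.

Lemma aT_ge0 : 0 <= aT T.
Proof. exact: le_aT aT_set0. Qed.

Lemma bT_ge0 : 0 <= bT T.
Proof. exact: le_bT bT_set0. Qed.

Lemma opnorm_ge0 : 0 <= opnorm T.
Proof. exact/le_opnorm/aT_set_sub/aT_set0. Qed.

Lemma aT_le_opnorm : aT T <= opnorm T.
Proof.
rewrite aTE; apply: ge_sup; first by exists 0; apply: aT_set0.
by move=> r /aT_set_sub /le_opnorm.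
Qed.

Lemma l2norm_mx_act_le (A : R) s s' :
  (forall q, supported q s -> supported (mx_act T q) s' -> l2norm q s <= 1 ->
    l2norm (mx_act T q) s' <= A) ->
  forall q, supported q s -> supported (mx_act T q) s' ->
    l2norm (mx_act T q) s' <= A * l2norm q s.
Proof.
move=> le_A q qs Tqs'.
apply: (@homogeneous_le _ _ (fun k => scalev k%:C%C) (fun q => l2norm q s)
  (fun q => l2norm (mx_act T q) s') (fun q => supported q s /\ supported (mx_act T q) s')
  A _ _ _ _ _ q (conj qs Tqs')) => [x|k x k_gt0|k x k_gt0|k x k_gt0 [xs Txs']|x [xs Txs']].
- exact: l2norm_ge0.
- by rewrite l2norm_scalev normc_real gtr0_norm.
- by rewrite mx_act_scalev l2norm_scalev normc_real gtr0_norm.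
- by rewrite mx_act_scalev; split; apply: supported_scalev.
- exact: le_A.
Qed.

Lemma l2norm_mx_act_le_opnorm q s s' : supported q s -> supported (mx_act T q) s' ->
  l2norm (mx_act T q) s' <= opnorm T * l2norm q s.
Proof.
by apply: l2norm_mx_act_le => x xs Txs' x_le1; apply: le_opnorm; exists x, s, s'.
Qed.

Lemma l2norm_mx_act_le_aT q s s' : all inFalpha s -> supported q s ->
  supported (mx_act T q) s' -> l2norm (mx_act T q) s' <= aT T * l2norm q s.
Proof.
by move=> As; apply: l2norm_mx_act_le => x xs Txs' x_le1; apply: le_aT; exists x, s, s'.
Qed.

Lemma vec_delta1_scale c (b : 'I_n -> C) :
  vec_delta1 (fun i => c * b i) = scalev c (vec_delta1 b).
Proof.
apply/funext => i; apply/funext => g.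
by rewrite /scalev /vec_delta1; case: ifP; rewrite ?mulr0.
Qed.

Lemma l2norm_adj_delta1_le_bT b s' : supported (adj_delta1 b) s' ->
  l2norm (adj_delta1 b) s' <= bT T * bnorm b.
Proof.
apply: (@homogeneous_le _ _ (fun k b i => k%:C%C * b i) bnorm
  (fun b => l2norm (adj_delta1 b) s') (fun b => supported (adj_delta1 b) s')
  (bT T) _ _ _ _ _ b) => [x|k x k_gt0|k x k_gt0|k x k_gt0|x Tbs' x_le1].
- exact: sqrtr_ge0.
- rewrite -l2norm_vec_delta1 vec_delta1_scale l2norm_scalev normc_real gtr0_norm //.
  by rewrite l2norm_vec_delta1.
- by rewrite /adj_delta1 vec_delta1_scale mx_act_scalev l2norm_scalev normc_real gtr0_norm.
- by rewrite /adj_delta1 vec_delta1_scale mx_act_scalev; apply: supported_scalev.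
- by apply: le_bT; exists x, s'.
Qed.

Definition adj_support : seq FG := undup [seq invFG p.2 | p <- terms T].

Lemma mem_adj_support i j p : p \in T i j -> invFG p.2 \in adj_support.
Proof. by move=> pT; rewrite mem_undup; apply: map_f; apply: mem_terms pT. Qed.

Lemma conj_adj_delta1E b j y : (adj_delta1 b j y)^*%C =
  \sum_(i < n) \sum_(p <- T i j) (if y == invFG p.2 then p.1 * (b i)^*%C else 0).
Proof.
rewrite /adj_delta1 mx_actE rmorph_sum; apply: eq_bigr => i _.
rewrite mxE big_map rmorph_sum; apply: eq_bigr => p _.
rewrite /vec_delta1 invFGK mulFG_eq1 /= rmorphM /= conjcK.
by case: eqP; rewrite ?rmorph0 ?mulr0.
Qed.

Lemma supported_adj_delta1 b : supported (adj_delta1 b) adj_support.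
Proof.
move=> j y yn; apply/eqP; rewrite -conjc_eq0 conj_adj_delta1E; apply/eqP.
rewrite big1 // => i _; rewrite big1_seq // => p /andP [_ pT].
by case: eqP => // yp; move: yn; rewrite yp (mem_adj_support pT).
Qed.

Lemma adj_delta1_pairing b r :
  \sum_(y <- adj_support) \sum_(j < n) r j y * (adj_delta1 b j y)^*%C =
  \sum_(i < n) (b i)^*%C * mx_act T r i oneFG.
Proof.
transitivity (\sum_(y <- adj_support) \sum_(j < n) \sum_(i < n) \sum_(p <- T i j)
    (if y == invFG p.2 then r j y * (p.1 * (b i)^*%C) else 0)).
  apply: eq_bigr => y _; apply: eq_bigr => j _; rewrite conj_adj_delta1E mulr_sumr.
  apply: eq_bigr => i _; rewrite mulr_sumr; apply: eq_bigr => p _.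
  by case: eqP; rewrite ?mulr0.
rewrite exchange_big /=; under eq_bigr do rewrite exchange_big /=.
rewrite exchange_big /=; apply: eq_bigr => i _.
rewrite mx_actE mulr_sumr; apply: eq_bigr => j _.
rewrite exchange_big mulr_sumr; apply: eq_big_seq => p pT /=.
rewrite sum_seq_pred1 ?undup_uniq ?(mem_adj_support pT) //.
by rewrite mulFG1; ring.
Qed.

Lemma l2norm_adj_delta1E b :
  l2norm (adj_delta1 b) adj_support = Num.sqrt (sqnorm (adj_delta1 b) adj_support).
Proof. by rewrite l2normE undup_id ?undup_uniq. Qed.

Lemma adj_delta1_pairing_le b r :
  normc (\sum_(i < n) (b i)^*%C * mx_act T r i oneFG) <=
  Num.sqrt (sqnorm r adj_support) * l2norm (adj_delta1 b) adj_support.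
Proof. by rewrite -adj_delta1_pairing l2norm_adj_delta1E; apply: pairing_le. Qed.

Lemma bT_le_opnorm : bT T <= opnorm T.
Proof.
rewrite bTE; apply: ge_sup; first by exists 0; apply: bT_set0.
move=> _ [b [s' [b_le1 Tbs' ->]]].
have eta_supp := supported_adj_delta1 b.
rewrite (eq_l2norm_supported Tbs' eta_supp).
set U := oneFG :: act_support T adj_support.
have Teta_supp : supported (mx_act T (adj_delta1 b)) U.
  by apply: (supported_sub (supported_mx_act eta_supp)) => y yU; rewrite inE yU orbT.
apply: le_of_sqr_le_mul; [exact: l2norm_ge0 | exact: opnorm_ge0 |].
have -> : l2norm (adj_delta1 b) adj_support ^+ 2 =
    normc (\sum_(i < n) (b i)^*%C * mx_act T (adj_delta1 b) i oneFG).
  rewrite l2norm_adj_delta1E sqr_sqrtr ?sqnorm_ge0 // -[LHS]ger0_norm ?sqnorm_ge0 //.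
  by rewrite -normc_real sqnorm_pairing adj_delta1_pairing.
apply: le_trans (_ : bnorm b * l2norm (mx_act T (adj_delta1 b)) U <= _); last first.
  apply: le_trans (l2norm_mx_act_le_opnorm eta_supp Teta_supp).
  by rewrite ler_piMl ?l2norm_ge0.
under eq_bigr do rewrite mulrC.
apply: le_trans (cauchy_schwarzC _ _ _) _; rewrite mulrC ler_wpM2l ?sqrtr_ge0 //.
exact: l2norm_point_le (mem_head _ _).
Qed.

Lemma bnorm_le_bT b r : (forall i, mx_act T r i oneFG = b i) ->
  bnorm b <= bT T * Num.sqrt (sqnorm r adj_support).
Proof.
move=> Tr_b; apply: le_of_sqr_le_mul; first exact: sqrtr_ge0.
  by rewrite mulr_ge0 ?bT_ge0 ?sqrtr_ge0.
rewrite -[bnorm b ^+ 2]ger0_norm ?sqr_ge0 // -normc_real sqr_bnorm.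
rewrite (eq_bigr (fun i => (b i)^*%C * mx_act T r i oneFG)) => [|i _]; last by rewrite Tr_b.
apply: le_trans (adj_delta1_pairing_le _ _) _.
rewrite [X in _ <= X]mulrAC [X in _ <= X]mulrC; apply: ler_wpM2l; first exact: sqrtr_ge0.
exact/l2norm_adj_delta1_le_bT/supported_adj_delta1.
Qed.

End Norms.

(** * The upper bound *)

Section Splitting.
Variable R : realType.
Local Notation C := R[i].
Local Notation normc := (@ComplexField.Normc.normc R).
Variables (n : nat) (T : 'M[lincomb R]_n).
Hypothesis T_LK : forall i j, in_LK (T i j).

(* By [junction_invK], the terms with [ohead g != ohead x] are those where x^-1 g
   is a reduced concatenation. *)
Definition cancel_part (q : 'I_n -> FG -> C) : 'I_n -> FG -> C := fun i g =>
  \sum_(j < n) \sum_(p <- T i j)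
    (if ohead (sval g) == ohead (sval p.2) then p.1 * q j (mulFG (invFG p.2) g) else 0).

Definition concat_part (q : 'I_n -> FG -> C) : 'I_n -> FG -> C := fun i g =>
  \sum_(j < n) \sum_(p <- T i j)
    (if ohead (sval g) == ohead (sval p.2) then 0 else p.1 * q j (mulFG (invFG p.2) g)).

Lemma mx_act_split q i g : mx_act T q i g = cancel_part q i g + concat_part q i g.
Proof.
rewrite mx_actE -big_split /=; apply: eq_bigr => j _.
by rewrite -big_split /=; apply: eq_bigr => p _; case: ifP; rewrite ?addr0 ?add0r.
Qed.

Definition junction_shift (q : 'I_n -> FG -> C) (g : FG) : 'I_n -> FG -> C :=
  fun j y => if junction y g then q j (mulFG y g) else 0.

Lemma mx_act_junction_shift q g i :
  mx_act T (junction_shift q g) i oneFG = concat_part q i g.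
Proof.
rewrite mx_actE; apply: eq_bigr => j _; apply: eq_big_seq => p pT.
by rewrite /junction_shift mulFG1 (junction_invK _ (T_LK pT)); case: eqP; rewrite ?mulr0.
Qed.

Lemma concat_part_le q g : \sum_(i < n) normc (concat_part q i g) ^+ 2 <=
  bT T ^+ 2 * sqnorm (junction_shift q g) (adj_support T).
Proof.
have := bnorm_le_bT (mx_act_junction_shift q g).
by rewrite /bnorm sqrt_le_mul_sqrt ?sqnorm_ge0 ?bT_ge0.
Qed.

Lemma junction_shift_neq0 q g y :
  \sum_(j < n) normc (junction_shift q g j y) ^+ 2 != 0 ->
  junction y g /\ forall j, junction_shift q g j y = q j (mulFG y g).
Proof.
case/sum_normc2_neq0 => j; rewrite /junction_shift.
by case: ifP => [J _|_]; rewrite ?eqxx.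
Qed.

Lemma concat_part_sqnorm_le q s U : supported q s -> uniq U ->
  sqnorm (concat_part q) U <= bT T ^+ 2 * sqnorm q (undup s).
Proof.
move=> qs UU; rewrite sqnormE.
apply: le_trans (ler_sum _ (fun g _ => concat_part_le q g)) _.
rewrite -mulr_sumr; apply: ler_wpM2l; first exact: sqr_ge0.
under eq_bigr do rewrite sqnormE.
rewrite -(big_allpairs
  (F := fun gy => \sum_(j < n) normc (junction_shift q gy.1 j gy.2) ^+ 2)).
rewrite sqnormE; apply: (@ler_sum_inj _ _ _ _ _ (fun gy => mulFG gy.2 gy.1)).
- by rewrite allpairs_pair_uniq ?undup_uniq.
- exact: undup_uniq.
- by move=> g; apply: sumr_ge0 => j _; apply: sqr_ge0.
- move=> [g y] _ /= nz; have [_ shiftE] := junction_shift_neq0 nz.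
  split; last by under eq_bigr do rewrite shiftE.
  rewrite mem_undup; apply: contraNT nz => /qs q0.
  by rewrite big1 // => j _; rewrite shiftE q0 ComplexField.Normc.normc0 expr0n.
- move=> [g y] [g' y'] /andP [_ /junction_shift_neq0 [J _]].
  move=> /andP [_ /junction_shift_neq0 [J' _]] /= E.
  by move: (junction_inj J J' E) => /= [-> ->].
Qed.

Definition alpha_slice (q : 'I_n -> FG -> C) (t : FG) : 'I_n -> FG -> C :=
  fun j v => if inFalpha v then q j (mulFG v t) else 0.

Lemma cancel_partE q i g k : ohead (sval g) = Some (eL k) ->
  cancel_part q i g = mx_act T (alpha_slice q (tail_blockFG g)) i (head_blockFG g).
Proof.
move=> gk; rewrite mx_actE; apply: eq_bigr => j _; apply: eq_big_seq => p pT.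
rewrite /alpha_slice (inFalpha_invK_head_block (T_LK pT) gk).
by rewrite mulFGA mul_head_tail_blockFG; case: eqP; rewrite ?mulr0.
Qed.

Lemma cancel_part_head q i g : cancel_part q i g != 0 ->
  exists k, ohead (sval g) = Some (eL k).
Proof.
apply: contraNP => no_e; apply/eqP; rewrite /cancel_part big1 // => j _.
rewrite big1_seq // => p /andP [_ pT]; have [k xk] := inK_head (T_LK pT).
by rewrite xk; case: eqP => // gk; case: no_e; exists k.
Qed.

Definition alpha_prefixes (s : seq FG) : seq FG := undup (map alpha_prefixFG s).
Definition alpha_rests (s : seq FG) : seq FG := undup (map alpha_restFG s).

Lemma alpha_slice_neq0 q s t j v : supported q s -> head_not_alpha (sval t) ->
  alpha_slice q t j v != 0 -> [/\ inFalpha v, v \in alpha_prefixes s & t \in alpha_rests s].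
Proof.
move=> qs Ht; rewrite /alpha_slice; case: ifP => [Av|]; last by rewrite eqxx.
have [pre_vt rest_vt] := alpha_prefix_restFG Av Ht.
move=> qvt; have vts : mulFG v t \in s by apply: contraNT qvt => /qs ->.
by split; rewrite // mem_undup; apply/mapP; exists (mulFG v t).
Qed.

Lemma supported_alpha_slice q s t : supported q s -> head_not_alpha (sval t) ->
  supported (alpha_slice q t) (alpha_prefixes s).
Proof.
move=> qs Ht j v; apply: contraNeq => /(alpha_slice_neq0 qs Ht).
by case.
Qed.

Lemma all_inFalpha_prefixes s : all inFalpha (alpha_prefixes s).
Proof. by apply/allP => v; rewrite mem_undup => /mapP [y _ ->]; apply: all_alpha_prefix. Qed.

Lemma head_not_alpha_rests s t : t \in alpha_rests s -> head_not_alpha (sval t).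
Proof. by rewrite mem_undup => /mapP [y _ ->]; apply: head_not_alpha_rest. Qed.

Lemma cancel_part_sqnorm_reindex q s U : supported q s -> uniq U ->
  sqnorm (cancel_part q) U <= \sum_(t <- alpha_rests s)
    sqnorm (mx_act T (alpha_slice q t)) (undup (act_support T (alpha_prefixes s))).
Proof.
move=> qs UU; under eq_bigr do rewrite sqnormE.
rewrite -(big_allpairs
  (F := fun th => \sum_(i < n) normc (mx_act T (alpha_slice q th.1) i th.2) ^+ 2)).
rewrite sqnormE; apply: (@ler_sum_inj _ _ _ _ _ (fun g => (tail_blockFG g, head_blockFG g))).
- exact: UU.
- by rewrite allpairs_pair_uniq ?undup_uniq.
- by move=> th; apply: sumr_ge0 => i _; apply: sqr_ge0.
- move=> g _ nz; have [i /cancel_part_head [k gk]] := sum_normc2_neq0 nz.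
  have partE i' := congr1 (fun z => normc z ^+ 2) (cancel_partE q i' gk).
  rewrite (eq_bigr _ (fun i' _ => partE i')) in nz *.
  split=> //; have [i' Ti'] := sum_normc2_neq0 nz.
  have Ht : head_not_alpha (sval (tail_blockFG g)) := head_not_alpha_tail_block _.
  apply: allpairs_f.
    have [j [v slice_nz]] : exists j v, alpha_slice q (tail_blockFG g) j v != 0.
      apply: (contraNP _ Ti') => no_nz; apply/eqP/mx_act0 => j v.
      by apply/eqP/negPn/negP => slice_nz; apply: no_nz; exists j, v.
    by case: (alpha_slice_neq0 qs Ht slice_nz).
  rewrite mem_undup; apply: contraNT Ti' => hn.
  by rewrite (supported_mx_act (supported_alpha_slice qs Ht)).
- move=> g g' _ _ E; rewrite -(mul_head_tail_blockFG g) -(mul_head_tail_blockFG g').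
  by move: (congr1 fst E) (congr1 snd E) => /= -> ->.
Qed.

Lemma alpha_slice_sqnorm_le q s t : supported q s -> head_not_alpha (sval t) ->
  sqnorm (mx_act T (alpha_slice q t)) (undup (act_support T (alpha_prefixes s))) <=
  aT T ^+ 2 * sqnorm (alpha_slice q t) (alpha_prefixes s).
Proof.
move=> qs Ht; have slice_supp := supported_alpha_slice qs Ht.
have := l2norm_mx_act_le_aT (T := T) (all_inFalpha_prefixes s) slice_supp
  (supported_mx_act slice_supp).
by rewrite !l2normE (undup_id (undup_uniq _)) sqrt_le_mul_sqrt ?sqnorm_ge0 ?aT_ge0.
Qed.

Lemma alpha_slice_sum_neq0 q t v :
  \sum_(j < n) normc (alpha_slice q t j v) ^+ 2 != 0 ->
  inFalpha v /\ forall j, alpha_slice q t j v = q j (mulFG v t).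
Proof.
case/sum_normc2_neq0 => j; rewrite /alpha_slice.
by case: ifP => [Av _|_]; rewrite ?eqxx.
Qed.

Lemma sum_alpha_slices_le q s : supported q s ->
  \sum_(t <- alpha_rests s) sqnorm (alpha_slice q t) (alpha_prefixes s) <= sqnorm q (undup s).
Proof.
move=> qs; under eq_bigr do rewrite sqnormE.
rewrite -(big_allpairs (F := fun tv => \sum_(j < n) normc (alpha_slice q tv.1 j tv.2) ^+ 2)).
rewrite sqnormE; apply: (@ler_sum_inj _ _ _ _ _ (fun tv => mulFG tv.2 tv.1)).
- by rewrite allpairs_pair_uniq ?undup_uniq.
- exact: undup_uniq.
- by move=> g; apply: sumr_ge0 => j _; apply: sqr_ge0.
- move=> [t v] _ /= nz; have [_ sliceE] := alpha_slice_sum_neq0 nz.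
  split; last by under eq_bigr do rewrite sliceE.
  rewrite mem_undup; apply: contraNT nz => /qs q0.
  by rewrite big1 // => j _; rewrite sliceE q0 ComplexField.Normc.normc0 expr0n.
- move=> [t v] [t' v'] /= /andP [+ nz] /andP [+ nz'] E.
  rewrite !mem_allpairs_pair => /andP [/head_not_alpha_rests Ht _].
  move=> /andP [/head_not_alpha_rests Ht' _]; rewrite /= in nz nz'.
  have [Av _] := alpha_slice_sum_neq0 nz; have [Av' _] := alpha_slice_sum_neq0 nz'.
  have [pv rt] := alpha_prefix_restFG Av Ht; have [pv' rt'] := alpha_prefix_restFG Av' Ht'.
  have vv' : v = v' by rewrite -pv E pv'.
  have tt' : t = t' by rewrite -rt E rt'.
  by rewrite vv' tt'.
Qed.

Lemma cancel_part_sqnorm_le q s U : supported q s -> uniq U ->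
  sqnorm (cancel_part q) U <= aT T ^+ 2 * sqnorm q (undup s).
Proof.
move=> qs UU; apply: le_trans (cancel_part_sqnorm_reindex qs UU) _.
apply: le_trans (_ : \sum_(t <- alpha_rests s)
  aT T ^+ 2 * sqnorm (alpha_slice q t) (alpha_prefixes s) <= _).
  rewrite big_seq [X in _ <= X]big_seq; apply: ler_sum => t /head_not_alpha_rests Ht.
  exact: alpha_slice_sqnorm_le.
by rewrite -mulr_sumr; apply: ler_wpM2l; [exact: sqr_ge0 | exact: sum_alpha_slices_le].
Qed.

Lemma opnorm_le_aT_add_bT : opnorm T <= aT T + bT T.
Proof.
rewrite opnormE; apply: ge_sup; first by exists 0; apply/aT_set_sub/aT_set0.
move=> _ [q [s [s' [qs _ q_le1 ->]]]]; have U_uniq := undup_uniq s'.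
rewrite l2normE; apply: le_trans (minkowski _ (mx_act_split q)) _.
have le_cancel : Num.sqrt (sqnorm (cancel_part q) (undup s')) <= aT T * l2norm q s.
  by rewrite l2normE sqrt_le_mul_sqrt ?sqnorm_ge0 ?aT_ge0 ?cancel_part_sqnorm_le.
have le_concat : Num.sqrt (sqnorm (concat_part q) (undup s')) <= bT T * l2norm q s.
  by rewrite l2normE sqrt_le_mul_sqrt ?sqnorm_ge0 ?bT_ge0 ?concat_part_sqnorm_le.
apply: le_trans (lerD le_cancel le_concat) _.
by rewrite -mulrDl ler_piMr ?addr_ge0 ?aT_ge0 ?bT_ge0.
Qed.

End Splitting.

Unset Implicit Arguments.

Theorem proposition8 (R : realType) (n : nat) (hn : (0 < n)%N)
  (T : 'M[lincomb R]_n) (hT : forall i j, in_LK (T i j)) :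
  Num.max (aT T) (bT T) <= opnorm T <= aT T + bT T.
Proof.
by rewrite ge_max aT_le_opnorm bT_le_opnorm (opnorm_le_aT_add_bT hT).
Qed.
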